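(* Let $m > 1$ be an integer, and let $\lambda = (\lambda_1, \ldots, \lambda_m)$ be a sequence of integers with $\lambda_1 \geq \cdots \geq \lambda_m > 0$ and $\lambda_1 > 1$. Define the sequence $\mu = (\mu_1, \ldots, \mu_{2m - 1})$ by \[\mu_{k} = \max_{\substack{1 \le i, j \le m\\ i + j - 1 = k}} (\lambda_i + \lambda_j - 1)\] for $1 \leq k \leq 2m-1$. Then \[\sum_{k=1}^{2m-1} \mu_k \geq 3\left(\sum_{k=1}^m \lambda_k\right) - 3.\] *)

From mathcomp Require Import all_boot.
Set Implicit Arguments. Unset Strict Implicit. Unset Printing Implicit Defensive.

(* Indices are 0-based: lambda i for i < m corresponds to lambda_{i+1}.
   mu k (k < 2m-1) corresponds to mu_{k+1}: max over i,j < m with i + j = k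
   (0-based version of i + j - 1 = k) of lambda_i + lambda_j - 1.
   Since all lambda_i >= 1, the truncated nat subtraction is exact. *)
Definition mu (m : nat) (lambda : nat -> nat) (k : nat) : nat :=
  \max_(i < m) \max_(j < m | i + j == k) (lambda i + lambda j - 1).

From Pilot Require Import Defs.
From mathcomp Require Import all_boot.
From mathcomp Require Import zify.

Set Implicit Arguments.
Unset Strict Implicit.

(* Each pair gives [lambda i + lambda j <= mu (i + j) + 1].  Take t with
   lambda t >= 2 and either t = m-1 or lambda (t+1) < lambda t.  The antidiagonals
   of the pairs (i, i), (i, i+1) for i <= t, of (t, j) for t < j < m and of
   (j, m-1) for t < j < m cover [0, 2m-1) exactly once; summing these bounds and
   using lambda j <= lambda t - 1 for j > t leaves a nonnegative slack. *)

Section AntidiagonalMax.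

Variables (m : nat) (lambda : nat -> nat).
Hypothesis lambda_gt0 : forall {i}, i < m -> 0 < lambda i.
Hypothesis lambda_nonincr : forall {i j}, i <= j < m -> lambda j <= lambda i.

Local Notation mu := (mu m lambda).

Lemma leq_pair_mu i j : i < m -> j < m -> lambda i + lambda j <= (mu (i + j)).+1.
Proof.
move=> lt_im lt_jm; rewrite /Defs.mu.
have mu_ij : lambda i + lambda j - 1 <= \max_(i' < m) \max_(j' < m | i' + j' == i + j)
    (lambda i' + lambda j' - 1).
  apply: leq_trans (leq_bigmax (Ordinal lt_im)) => /=.
  exact: (leq_bigmax_cond (Ordinal lt_jm) (eqxx (i + j))).
have := lambda_gt0 lt_im; lia.
Qed.

Lemma sum_mu_diagonal t : t < m ->
  4 * \sum_(0 <= i < t.+1) lambda i <=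
  \sum_(0 <= k < (2 * t).+1) (mu k).+1 + lambda 0 + lambda t.
Proof.
elim: t => [|t IH] lt_tm.
  by rewrite !big_nat1; have := leq_pair_mu lt_tm lt_tm; rewrite addn0; lia.
have lt_t'm : t < m by lia.
have := leq_pair_mu lt_t'm lt_tm; rewrite (_ : t + t.+1 = (2 * t).+1); last by lia.
have := leq_pair_mu lt_tm lt_tm; rewrite (_ : t.+1 + t.+1 = (2 * t).+2); last by lia.
rewrite (_ : (2 * t.+1).+1 = (2 * t).+3); last by lia.
rewrite big_nat_recr //= (big_nat_recr (2 * t).+2) //= (big_nat_recr (2 * t).+1) //=.
have := IH lt_t'm; lia.
Qed.

Lemma sum_mu_row i a b : i < m -> b <= m ->
  (b - a) * lambda i + \sum_(a <= j < b) lambda j <=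
  \sum_(a + i <= k < b + i) (mu k).+1.
Proof.
move=> lt_im le_bm; rewrite big_addn addnK -sum_nat_const_nat -big_split /=.
rewrite big_seq [X in _ <= X]big_seq; apply: leq_sum => j.
rewrite mem_index_iota => /andP[_ lt_jb].
by rewrite addnC; apply: leq_pair_mu => //; apply: leq_trans le_bm.
Qed.

Lemma sum_head_nonincr t : t < m ->
  lambda 0 + t * lambda t <= \sum_(0 <= i < t.+1) lambda i.
Proof.
elim: t => [|t IH] lt_tm; first by rewrite big_nat1 mul0n addn0.
have le_t1t : lambda t.+1 <= lambda t by apply: lambda_nonincr; rewrite leqnSn.
have : t * lambda t.+1 <= t * lambda t by rewrite leq_mul2l le_t1t orbT.
rewrite big_nat_recr //= mulSn; have := IH (ltnW lt_tm); lia.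
Qed.

Lemma sum_tail_after_drop t : t.+1 < m -> lambda t.+1 < lambda t ->
  \sum_(t.+1 <= j < m) lambda j <= (m - t.+2) * (lambda t).-1 + lambda m.-1.
Proof.
move=> lt_t1m drop_t; have m_eq : m = m.-1.+1 by lia.
rewrite {1}m_eq big_nat_recr /=; last by lia.
rewrite leq_add2r (_ : m - t.+2 = m.-1 - t.+1); last by lia.
rewrite -sum_nat_const_nat big_seq [X in _ <= X]big_seq; apply: leq_sum => j.
rewrite mem_index_iota => /andP[le_t1j lt_jm].
have : lambda j <= lambda t.+1 by apply: lambda_nonincr; lia.
lia.
Qed.

Lemma sum_mu_split t : t < m ->
  \sum_(k < 2 * m - 1) mu k + (2 * m - 1) =
  \sum_(0 <= k < (2 * t).+1) (mu k).+1 + \sum_((2 * t).+1 <= k < m + t) (mu k).+1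
  + \sum_(m + t <= k < 2 * m - 1) (mu k).+1.
Proof.
move=> lt_tm; rewrite -big_cat_nat ?ltn0Sn -?big_cat_nat; try lia.
under [RHS]eq_bigr do rewrite -addn1.
by rewrite big_split sum_nat_const_nat subn0 muln1 big_mkord.
Qed.

Lemma sum_mu_drop t : t.+1 < m -> lambda t.+1 < lambda t ->
  3 * (\sum_(i < m) lambda i) - 3 <= \sum_(k < 2 * m - 1) mu k.
Proof.
move=> lt_t1m drop_t; have lt_tm := ltnW lt_t1m; have lt_lastm : m.-1 < m by lia.
have split := sum_mu_split lt_tm.
have diag := sum_mu_diagonal lt_tm.
have row_t := sum_mu_row t.+1 lt_tm (leqnn m).
rewrite (_ : t.+1 + t = (2 * t).+1) in row_t; last by lia.
have row_last := sum_mu_row t.+1 lt_lastm (leqnn m).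
rewrite (_ : t.+1 + m.-1 = m + t) in row_last; last by lia.
rewrite (_ : m + m.-1 = 2 * m - 1) in row_last; last by lia.
have head := sum_head_nonincr lt_tm.
have tail := sum_tail_after_drop lt_t1m drop_t.
have sum_eq : \sum_(i < m) lambda i =
    \sum_(0 <= i < t.+1) lambda i + \sum_(t.+1 <= i < m) lambda i.
  by rewrite -big_cat_nat ?big_mkord //; lia.
have last_gt0 := lambda_gt0 lt_lastm.
have a_ge2 : 2 <= lambda t by apply: leq_ltn_trans (lambda_gt0 lt_t1m) drop_t.
have le_2t : 2 * t <= t * lambda t by rewrite mulnC leq_mul2l a_ge2 orbT.
move: row_t row_last tail; rewrite (_ : m - t.+1 = (m - t.+2).+1); last by lia.
have := leq_pmulr (m - t.+2) last_gt0.
have : (m - t.+2) * (lambda t).-1 + (m - t.+2) = (m - t.+2) * lambda t.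
  by rewrite -mulnSr prednK //; lia.
have := mulSn (m - t.+2) (lambda t); have := mulSn (m - t.+2) (lambda m.-1).
(* the slack is t (lambda t - 2) + (m - t - 2) (lambda (m-1) - 1) *)
lia.
Qed.

Hypothesis m_gt1 : 1 < m.

Lemma sum_mu_lasle_2t : 2 <= lambda m.-1 ->
  3 * (\sum_(i < m) lambda i) - 3 <= \sum_(k < 2 * m - 1) mu k.
Proof.
move=> lasle_2t; have lt_lastm : m.-1 < m by lia.
have split := sum_mu_split lt_lastm.
have mid_empty : \sum_((2 * m.-1).+1 <= k < m + m.-1) (mu k).+1 = 0 by rewrite big_geq //; lia.
have right_empty : \sum_(m + m.-1 <= k < 2 * m - 1) (mu k).+1 = 0 by rewrite big_geq //; lia.
have diag := sum_mu_diagonal lt_lastm.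
have head := sum_head_nonincr lt_lastm.
have sum_eq : \sum_(i < m) lambda i = \sum_(0 <= i < m.-1.+1) lambda i.
  by rewrite prednK ?big_mkord //; lia.
have quad : 2 * m.-2 <= m.-2 * lambda m.-1 by rewrite mulnC leq_mul2l lasle_2t orbT.
have : m.-1 * lambda m.-1 = m.-2 * lambda m.-1 + lambda m.-1.
  by rewrite -mulSnr prednK //; lia.
(* the slack is (m - 2) (lambda (m-1) - 2) *)
lia.
Qed.

End AntidiagonalMax.

Theorem lemmaA1 (m : nat) (lambda : nat -> nat) :
  1 < m ->
  (forall i j, i <= j < m -> lambda j <= lambda i) ->
  (forall i, i < m -> 0 < lambda i) ->
  1 < lambda 0 ->
  \sum_(k < (2 * m - 1)) mu m lambda k >= 3 * (\sum_(i < m) lambda i) - 3.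
Proof.
move=> m_gt1 lambda_nonincr lambda_gt0 lambda0_gt1.
have [lasle_2t | last_lt2] := leqP 2 (lambda m.-1).
  exact: sum_mu_lasle_2t.
pose big_at n := (n < m) && (1 < lambda n).
have big0 : exists n, big_at n by exists 0; rewrite /big_at; lia.
have big_bounded n : big_at n -> n <= m by case/andP => /ltnW.
case: (ex_maxnP big0 big_bounded) => t /andP[lt_tm big_t] after_t.
have lt_t1m : t.+1 < m.
  rewrite ltn_neqAle lt_tm andbT; apply: (contraTneq _ last_lt2) => <- /=.
  by rewrite -leqNgt.
have : ~~ big_at t.+1 by apply/negP => /after_t; rewrite ltnn.
rewrite /big_at lt_t1m /= -leqNgt => small_t1.
exact: (sum_mu_drop lambda_gt0 lambda_nonincr lt_t1m (leq_ltn_trans small_t1 big_t)).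
Qed.
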